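(* Let $n\in\mathbb{N}^*$, $N\in\mathbb{N}^*$, and let $R_{a,b}(\lambda)=\lambda\, I_{a,b}+\mathbb{P}_{a,b}\in\operatorname{End}(V_a\otimes V_b)$, $V_a\cong V_b\cong\mathbb{C}^n$, where $\mathbb{P}_{a,b}$ is the permutation operator. Let $K\in\operatorname{End}(\mathbb{C}^n)$, let $\xi_1,\dots,\xi_N\in\mathbb{C}$, let $\mathcal{H}=\bigotimes_{l=1}^N V_l$ with $V_l\cong\mathbb{C}^n$, define the monodromy matrix $M^{(K)}_a(\lambda)=K_aR_{a,N}(\lambda-\xi_N)\cdots R_{a,1}(\lambda-\xi_1)$ and the transfer matrix $T^{(K)}(\lambda)=\operatorname{tr}_{V_a}M^{(K)}_a(\lambda)\in\operatorname{End}(\mathcal{H})$. Assume that $K$ is $w$-simple on $\mathbb{C}^n$. Then for almost any choice of the covector $\langle S|\in\mathcal{H}^*$ and of the parameters $(\xi_1,\dots,\xi_N)$, the set $$\langle h_1,\dots,h_N|:=\langle S|\prod_{a=1}^N\big(T^{(K)}(\xi_a)\big)^{h_a},\qquad (h_1,\dots,h_N)\in\{0,\dots,n-1\}^N,$$ is a basis of $\mathcal{H}^*$. In particular, for almost all values of $(\xi_1,\dots,\xi_N)$, one can take $\langle S|=\bigotimes_{a=1}^N\langle S,a|$ for any local covectors $\langle S,a|\in V_a^*$ such that $\{\langle S,a|K_a^h: h=0,\dots,n-1\}$ is a basis of $V_a^*$ for each $a=1,\dots,N$ (such $\langle S,a|$ exist since $K$ is $w$-simple).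
   Context: A matrix $K$ is $w$-simple if every eigenvalue of $K$ has exactly one eigenvector up to multiplication by a nonzero scalar. $K_a$ denotes $K$ acting on the auxiliary space $V_a$ (respectively on the site space $V_a$ in the last sentence), and $\operatorname{tr}_{V_a}$ is the partial trace over the auxiliary space $V_a\cong\mathbb{C}^n$. *)

(* (with multinomials for "almost all" = outside the zero set
   of a nonzero polynomial). *)
From HB Require Import structures.
From mathcomp Require Import all_boot all_order all_algebra.
From mathcomp Require Export mpoly.
Set Implicit Arguments. Unset Strict Implicit. Unset Printing Implicit Defensive.
Import Order.TTheory GRing.Theory Num.Theory.
Local Open Scope ring_scope.

Section Defs.
Variable C : numClosedFieldType.

Definition op (I : finType) := 'M[C]_#|I|.
Definition mkop (I : finType) (f : I -> I -> C) : op I :=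
  \matrix_(i, j) f (enum_val i) (enum_val j).
Definition ent (I : finType) (A : op I) (x y : I) : C :=
  A (enum_rank x) (enum_rank y).

Definition w_simple n (K : 'M[C]_n) : Prop :=
  forall (a : C) (v w : 'cV[C]_n), v != 0 -> K *m v = a *: v ->
    K *m w = a *: w -> exists c : C, w = c *: v.

(* Basis indices of H = V_1 (x) ... (x) V_N, V_l = C^n. *)
Definition cfg N n := {ffun 'I_N -> 'I_n}.
(* Basis indices of V_a (x) H (auxiliary space first). *)
Definition aux N n := ('I_n * cfg N n)%type.

(* Permutation operator P_{a,l} on V_a (x) H: swap the auxiliary index with
   the index of site l. *)
Definition swap_site N n (l : 'I_N) (y : aux N n) : aux N n :=
  (y.2 l, finfun (fun m => if m == l then y.1 else y.2 m)).
Definition Pperm N n (l : 'I_N) : op (aux N n) :=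
  mkop (fun x y => (x == swap_site l y)%:R).
Definition Rmat N n (l : 'I_N) (mu : C) : op (aux N n) :=
  mu%:M + Pperm n l.
Definition Kaux N n (K : 'M[C]_n) : op (aux N n) :=
  mkop (fun x y => K x.1 y.1 * (x.2 == y.2)%:R).
Definition monodromy N n (K : 'M[C]_n) (xi : 'I_N -> C) (lam : C)
  : op (aux N n) :=
  Kaux N K *m \prod_(l < N) Rmat n (rev_ord l) (lam - xi (rev_ord l)).
Definition transfer N n (K : 'M[C]_n) (xi : 'I_N -> C) (lam : C)
  : op (cfg N n) :=
  mkop (fun c c' => \sum_(i < n) ent (monodromy K xi lam) (i, c) (i, c')).

Definition hvec N n (K : 'M[C]_n) (xi : 'I_N -> C) (S : 'rV[C]_#|cfg N n|)
  (h : cfg N n) : 'rV[C]_#|cfg N n| :=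
  S *m \prod_(a < N) (transfer K xi (xi a)) ^+ (h a).

Definition is_basis (I : finType) d (f : I -> 'rV[C]_d) : bool :=
  let M := \matrix_(i < #|I|) f (enum_val i) in row_free M && row_full M.

Definition tensor_covec N n (s : 'I_N -> 'rV[C]_n) : 'rV[C]_#|cfg N n| :=
  \row_j \prod_(a < N) s a 0 ((enum_val j : cfg N n) a).

Definition join_pt d N (S : 'rV[C]_d) (xi : 'I_N -> C) : 'I_(d + N) -> C :=
  fun i => match split i with inl j => S 0 j | inr j => xi j end.
End Defs.

(* Whether the covectors <h| form a basis is decided by a determinant that is
   polynomial in (S, xi), so it suffices to exhibit one good point, and for the
   last claim one good xi for a product covector <S| = (x)_a <S,a|.  Take
   xi_l = l / u.  For l <> a one has R_{a,l}(xi_a - xi_l) = u^-1 ((a - l) + u P_{a,l}),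
   so up to nonzero scalars T(xi_a) is polynomial in u, and at u = 0 the chain
   collapses to tr_a (K_a P_{a,a}), i.e. K acting on site a.  There the covectors
   become the tensor products of the local Krylov covectors <S,a| K^h, a basis;
   hence the determinant, as a polynomial in u, has a nonzero non-root.
   Cyclic local covectors exist because the eigenspaces of a w-simple K are lines:
   a proper Krylov space of K can always be enlarged. *)

From HB Require Import structures.
From mathcomp Require Import all_boot all_order all_algebra.
From mathcomp Require Import mpoly zify.
Set Implicit Arguments. Unset Strict Implicit. Unset Printing Implicit Defensive.
Import Order.TTheory GRing.Theory Num.Theory.
Local Open Scope ring_scope.

Lemma prod_eq_indicator (R : comPzSemiRingType) (I : finType) (J : eqType) (P : pred I)
    (f g : I -> J) :
  \prod_(i | P i) ((f i == g i)%:R : R) = [forall (i | P i), f i == g i]%:R.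
Proof.
have [eq_fg|/forall_inPn[i Pi neq_i]] := boolP [forall (i | P i), f i == g i].
  by apply: big1 => i Pi; rewrite (forall_inP eq_fg).
by rewrite (bigD1 i) //= (negPf neq_i) mul0r.
Qed.

Lemma sumr_delta (R : pzSemiRingType) (I : finType) (F : I -> R) w :
  \sum_z F z * (z == w)%:R = F w.
Proof. by under eq_bigr do rewrite mulr_natr mulrb; rewrite -big_mkcond big_pred1_eq. Qed.

Lemma prodmxZ (R : comNzRingType) m (X : eqType) (r : seq X) (c : X -> R)
    (A : X -> 'M[R]_m) :
  \prod_(x <- r) (c x *: A x) = (\prod_(x <- r) c x) *: \prod_(x <- r) A x.
Proof.
elim: r => [|x r IH]; first by rewrite !big_nil scale1r.
by rewrite !big_cons IH -!mulmxE -scalemxAl -scalemxAr scalerA.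
Qed.

Lemma exprmxZ (R : comNzRingType) m (c : R) (A : 'M[R]_m) k :
  (c *: A) ^+ k = c ^+ k *: A ^+ k.
Proof.
elim: k => [|k IH]; first by rewrite !expr0 scale1r.
by rewrite !exprS IH -!mulmxE -scalemxAl -scalemxAr scalerA.
Qed.

Section Kronecker.
Variables (R : comUnitRingType) (n N : nat).
Local Notation cfg := (cfg N n).

Definition kronmx (L : 'I_N -> 'M[R]_n) : 'M[R]_#|cfg| :=
  \matrix_(i, j) \prod_b L b ((enum_val i : cfg) b) ((enum_val j : cfg) b).

Lemma eq_kronmx L L' : L =1 L' -> kronmx L = kronmx L'.
Proof.
by move=> eqL; apply/matrixP => i j; rewrite !mxE; apply: eq_bigr => b _; rewrite eqL.
Qed.

Lemma sum_cfg_prod (F : 'I_N -> 'I_n -> R) :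
  \sum_(k < #|cfg|) \prod_b F b ((enum_val k : cfg) b) = \prod_b \sum_i F b i.
Proof.
rewrite bigA_distr_bigA (reindex (@enum_val _ (mem cfg))) //.
by exists enum_rank => c _; rewrite ?enum_valK ?enum_rankK.
Qed.

Lemma kronmxM L L' : kronmx L *m kronmx L' = kronmx (fun b => L b *m L' b).
Proof.
apply/matrixP => i j; rewrite /kronmx !mxE.
under [RHS]eq_bigr do rewrite mxE.
by rewrite -sum_cfg_prod; apply: eq_bigr => k _; rewrite !mxE -big_split.
Qed.

Lemma kronmx1 : kronmx (fun _ => 1%:M) = 1%:M.
Proof.
apply/matrixP => i j; rewrite !mxE; under eq_bigr do rewrite mxE.
rewrite (prod_eq_indicator _ xpredT) -(inj_eq enum_val_inj); congr (_ %:R); congr nat_of_bool.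
apply/idP/eqP => [/forall_inP eq_ij|->]; last by apply/forall_inP.
by apply/ffunP => b; apply/eqP/eq_ij.
Qed.

Lemma kronmx_prod (X : eqType) (r : seq X) (L : X -> 'I_N -> 'M[R]_n) :
  \prod_(x <- r) kronmx (L x) = kronmx (fun b => \prod_(x <- r) L x b).
Proof.
elim: r => [|x r IH].
  by rewrite big_nil -[LHS]idmxE -kronmx1; apply: eq_kronmx => b; rewrite big_nil.
by rewrite big_cons IH -mulmxE kronmxM; apply: eq_kronmx => b; rewrite big_cons.
Qed.

Lemma kronmxX L k : kronmx L ^+ k = kronmx (fun b => L b ^+ k).
Proof.
elim: k => [|k IH].
  by rewrite expr0 -[LHS]idmxE -kronmx1; apply: eq_kronmx => b; rewrite expr0.
by rewrite exprS IH -mulmxE kronmxM; apply: eq_kronmx => b; rewrite exprS.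
Qed.

Lemma kronmx_unit L : (forall b, L b \in unitmx) -> kronmx L \in unitmx.
Proof.
move=> L_unit; have [] := @mulmx1_unit _ _ (kronmx L) (kronmx (fun b => invmx (L b))) => //.
by rewrite kronmxM -kronmx1; apply: eq_kronmx => b; rewrite mulmxV.
Qed.
End Kronecker.

Section PartialTrace.
Variables (I J : finType).

Definition ptrace (R : nmodType) (M : 'M[R]_#|{: I * J}|) : 'M[R]_#|J| :=
  \matrix_(p, q) \sum_(i : I) M (enum_rank (i, enum_val p)) (enum_rank (i, enum_val q)).

Lemma map_ptrace (R R' : nmodType) (f : {additive R -> R'}) M :
  map_mx f (ptrace M) = ptrace (map_mx f M).
Proof. by apply/matrixP => p q; rewrite !mxE raddf_sum; apply: eq_bigr => i _; rewrite mxE. Qed.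

Lemma ptraceZ (R : pzRingType) (c : R) M : ptrace (c *: M) = c *: ptrace M.
Proof. by apply/matrixP => p q; rewrite !mxE mulr_sumr; apply: eq_bigr => i _; rewrite mxE. Qed.

End PartialTrace.

Section TransferRows.
Variables (n N : nat).
Local Notation d := #|cfg N n|.
Local Notation D := #|{: 'I_n * cfg N n}|.

(* Over any commutative ring, so that it can be formed with polynomial entries
   and evaluated through [map_mx]; with [F a l = R_{a,l}(xi_a - xi_l)] its rows
   are the covectors <h|. *)
Definition hrows_mx (R : comNzRingType) (S : 'rV[R]_d) (Kx : 'M[R]_D)
    (F : 'I_N -> 'I_N -> 'M[R]_D) : 'M[R]_d :=
  \matrix_(i < d) (S *m \prod_(a < N) @ptrace 'I_n (cfg N n) _
     (Kx *m \prod_(l < N) F a (rev_ord l)) ^+ (enum_val i : cfg N n) a).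

Lemma eq_hrows_mx (R : comNzRingType) S Kx (F F' : 'I_N -> 'I_N -> 'M[R]_D) :
  F =2 F' -> hrows_mx S Kx F = hrows_mx S Kx F'.
Proof.
move=> eqF; apply/row_matrixP => i; rewrite !rowK; congr (_ *m _).
apply: eq_bigr => a _; congr (ptrace (_ *m _) ^+ _).
by apply: eq_bigr => l _; rewrite eqF.
Qed.

Lemma map_hrows_mx (R R' : comNzRingType) (f : {rmorphism R -> R'}) S Kx F :
  map_mx f (hrows_mx S Kx F) =
  hrows_mx (map_mx f S) (map_mx f Kx) (fun a l => map_mx f (F a l)).
Proof.
apply/row_matrixP => i; rewrite -map_row !rowK map_mxM rmorph_prod.
congr (_ *m _); apply: eq_bigr => a _.
by rewrite rmorphXn; congr (_ ^+ _); rewrite [LHS]map_ptrace map_mxM rmorph_prod.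
Qed.

Lemma hrows_mxZ (R : comNzRingType) S Kx (c : 'I_N -> 'I_N -> R) F :
  hrows_mx S Kx (fun a l => c a l *: F a l) =
  diag_mx (\row_i \prod_a (\prod_l c a l) ^+ (enum_val i : cfg N n) a) *m hrows_mx S Kx F.
Proof.
have E a k : ptrace (Kx *m \prod_l (c a (rev_ord l) *: F a (rev_ord l))) ^+ k =
    (\prod_l c a l) ^+ k *: ptrace (Kx *m \prod_l F a (rev_ord l)) ^+ k.
  rewrite prodmxZ -scalemxAr ptraceZ exprmxZ.
  by rewrite [in RHS](reindex_inj rev_ord_inj).
apply/row_matrixP => i; rewrite row_mul row_diag_mx -scalemxAl -rowE !rowK mxE /=.
by under eq_bigr do rewrite E; rewrite prodmxZ -scalemxAr.
Qed.

Lemma hrows_mxZ_unit (R : fieldType) S Kx (c : 'I_N -> 'I_N -> R) F :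
  (forall a l, c a l != 0) ->
  (hrows_mx S Kx (fun a l => c a l *: F a l) \in unitmx) = (hrows_mx S Kx F \in unitmx).
Proof.
move=> c_neq0; rewrite hrows_mxZ unitmx_mul; apply: andb_idl => _.
rewrite unitmxE det_diag unitfE; apply/prodf_neq0 => i _; rewrite mxE.
by apply/prodf_neq0 => a _; rewrite expf_neq0 //; apply/prodf_neq0.
Qed.

(* u R_{a,l}((a - l) / u) for l <> a, and R_{a,a}(0) for l = a. *)
Definition rescaled_R (R : comNzRingType) (P : 'I_N -> 'M[R]_D) (u : R) (a l : 'I_N)
  : 'M[R]_D := ((a : nat)%:R - (l : nat)%:R)%:M + (if l == a then 1 else u) *: P l.

Lemma map_rescaled_R (R R' : comNzRingType) (f : {rmorphism R -> R'}) P u a l :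
  map_mx f (rescaled_R P u a l) = rescaled_R (fun l => map_mx f (P l)) (f u) a l.
Proof.
by rewrite /rescaled_R map_mxD map_scalar_mx map_mxZ rmorphB !rmorph_nat (fun_if f) rmorph1.
Qed.

Lemma rescaled_R0 (R : comNzRingType) (P : 'I_N -> 'M[R]_D) a l :
  rescaled_R P 0 a l =
  (if l == a then 1 else (a : nat)%:R - (l : nat)%:R) *: (if l == a then P l else 1).
Proof.
rewrite /rescaled_R; have [->|_] := eqVneq l a; last by rewrite scale0r addr0 scalemx1.
by rewrite subrr raddf0 add0r.
Qed.

End TransferRows.

Lemma ltmx_witness (F : fieldType) m1 m2 n (W : 'M[F]_(m1, n)) (V : 'M[F]_(m2, n))
    (t : 'rV[F]_n) :
  (W <= V)%MS -> (t <= V)%MS -> ~~ (t <= W)%MS -> (W < V)%MS.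
Proof.
move=> WV tV tW; rewrite ltmxE WV /=; apply: contra tW => VW; exact: submx_trans tV VW.
Qed.

Section Krylov.
Variables (F : fieldType) (n' : nat) (K : 'M[F]_n'.+1).
Local Notation n := n'.+1.

Definition krylov_mx (s : 'rV[F]_n) : 'M[F]_n := \matrix_(k < n) (s *m K ^+ k).

Lemma char_poly_exprE : K ^+ n = - \sum_(j < n) (char_poly K)`_j *: K ^+ j.
Proof.
have lc : (char_poly K)`_n = 1.
  by have := monicP (char_poly_monic K); rewrite lead_coefE size_char_poly.
have CH := Cayley_Hamilton K.
rewrite -(coefK (char_poly K)) poly_def size_char_poly big_ord_recr /= lc scale1r in CH.
rewrite rmorphD rmorph_sum rmorphXn /= horner_mx_X in CH.
move/eqP: CH; rewrite addrC addr_eq0 => /eqP->; congr (- _).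
by apply: eq_bigr => j _; rewrite horner_mxZ rmorphXn /= horner_mx_X.
Qed.

Lemma krylov_row_sub s i : (i < n)%N -> (s *m K ^+ i <= krylov_mx s)%MS.
Proof.
move=> lt_in; rewrite -[i]/(nat_of_ord (Ordinal lt_in)).
by rewrite -(rowK (fun j => s *m K ^+ j)) row_sub.
Qed.

Lemma krylov_stable s : stablemx (krylov_mx s) K.
Proof.
apply/row_subP => k; rewrite row_mul rowK -mulmxA mulmxE -exprSr.
have [/krylov_row_sub//|] := ltnP k.+1 n.
move=> le_nSk; have -> : k.+1 = n by apply/eqP; rewrite eqn_leq le_nSk ltn_ord.
rewrite char_poly_exprE mulmxN eqmx_opp mulmx_sumr summx_sub // => j _.
by rewrite -scalemxAr scalemx_sub // krylov_row_sub.
Qed.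

Lemma krylov_stable_shift s a : stablemx (krylov_mx s) (K - a%:M).
Proof. by rewrite stablemxD ?stablemxN ?stablemxC ?krylov_stable. Qed.

Lemma krylov_expr_sub s i : (s *m K ^+ i <= krylov_mx s)%MS.
Proof.
elim: i => [|i IH]; first exact: krylov_row_sub.
by rewrite exprSr mulmxA (submx_trans (submxMr K IH)) ?krylov_stable.
Qed.

Lemma krylov_sub s : (s <= krylov_mx s)%MS.
Proof. by have := krylov_expr_sub s 0; rewrite expr0 mulmx1. Qed.

Lemma krylov_min s m (V : 'M[F]_(m, n)) :
  (s <= V)%MS -> stablemx V K -> (krylov_mx s <= V)%MS.
Proof.
move=> sV VK; apply/row_subP => k; rewrite rowK.
elim: (nat_of_ord k) => [|i IH]; first by rewrite expr0 mulmx1.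
by rewrite exprSr mulmxA (submx_trans (submxMr K IH)).
Qed.

Lemma krylov_sub_shift s a : (krylov_mx s <= krylov_mx s *m (K - a%:M) + s)%MS.
Proof.
apply/row_subP => k; rewrite rowK.
elim: (nat_of_ord k) => [|i IH]; first by rewrite expr0 mulmx1 addsmxSr.
have -> : s *m K ^+ i.+1 = s *m K ^+ i *m (K - a%:M) + a *: (s *m K ^+ i).
  by rewrite exprSr mulmxA mulmxBr mul_mx_scalar subrK.
by rewrite addmx_sub ?scalemx_sub // (submx_trans _ (addsmxSl _ _)) ?submxMr ?krylov_expr_sub.
Qed.

Lemma krylov_preimage_sub s t a :
  t *m (K - a%:M) = s -> (krylov_mx s <= krylov_mx t)%MS.
Proof.
move=> At; apply: krylov_min (krylov_stable t).
rewrite -At mulmxBr mul_mx_scalar addmx_sub ?eqmx_opp ?scalemx_sub ?krylov_sub //.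
by rewrite -[K]expr1 krylov_expr_sub.
Qed.

Lemma krylov_eigen_shift s t a : t *m (K - a%:M) = 0 ->
  krylov_mx (s + t) *m (K - a%:M) = krylov_mx s *m (K - a%:M).
Proof.
move=> At; have tK : t *m K = a *: t.
  by apply/eqP; rewrite -subr_eq0 -mul_mx_scalar -mulmxBr At.
have tKX k : t *m K ^+ k = a ^+ k *: t.
  elim: k => [|k IH]; first by rewrite expr0 mulmx1 scale1r.
  by rewrite exprSr mulmxA IH -scalemxAl tK scalerA exprSr.
apply/row_matrixP => k; rewrite !row_mul !rowK mulmxDl tKX mulmxDl -scalemxAl At.
by rewrite scaler0 addr0.
Qed.

End Krylov.

Section KrylovClosedField.
Variables (F : closedFieldType) (n' : nat) (K : 'M[F]_n'.+1).
Local Notation n := n'.+1.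

Lemma exists_quotient_eigen (W : 'M[F]_n) : (\rank W < n)%N ->
  exists a (t : 'rV_n), ~~ (t <= W)%MS /\ (t *m (K - a%:M) <= W)%MS.
Proof.
(* Some t0 outside W is killed by prod_z (K - z) (Cayley-Hamilton); the first
   factor that sends the current iterate into W gives a and t. *)
move=> W_lt; have /row_subPn[i t0W] : ~~ (1%:M <= W)%MS by rewrite sub1mx /row_full ltn_eqF.
have [rs CHrs] := closed_field_poly_normal (char_poly K).
rewrite (monicP (char_poly_monic K)) scale1r in CHrs.
have : (row i 1%:M *m \prod_(z <- rs) (K - z%:M) <= W)%MS.
  suff -> : \prod_(z <- rs) (K - z%:M) = 0 by rewrite mulmx0 sub0mx.
  rewrite -(Cayley_Hamilton K) CHrs rmorph_prod; apply: eq_bigr => z _.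
  by rewrite rmorphB /= horner_mx_X horner_mx_C.
elim: rs (row i 1%:M) t0W {CHrs} => [|z rs IH] t0 t0W.
  by rewrite big_nil mulmx1 (negPf t0W).
have [|t0zW] := boolP (t0 *m (K - z%:M) <= W)%MS; first by exists z, t0.
by rewrite big_cons mulmxA; apply: IH.
Qed.

Hypothesis kermx_rank_le1 : forall a, (\rank (kermx (K - a%:M)) <= 1)%N.

Lemma krylov_eigen_grow s t a : ~~ (t <= krylov_mx K s)%MS -> t *m (K - a%:M) = 0 ->
  (krylov_mx K s < krylov_mx K (s + t))%MS.
Proof.
(* The eigenspace of a is the line through t, which misses W; so K - a is
   injective on W and W = W (K - a) = Krylov(s + t) (K - a). *)
set W := krylov_mx K s; set A := K - a%:M => tW At.
have capW0 : (W :&: kermx A)%MS = 0.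
  apply/eqP; apply: contraR tW => /rowV0Pn[e]; rewrite sub_capmx => /andP[eW eA] e_neq0.
  have eA_eq : (e == kermx A)%MS.
    by rewrite -(geq_leqif (mxrank_leqif_eq eA)) rank_rV e_neq0 kermx_rank_le1.
  by rewrite (submx_trans _ eW) // (eqmxP eA_eq); apply/sub_kermxP.
have W_WA : (W <= W *m A)%MS.
  have := mxrank_mul_ker W A; rewrite capW0 mxrank0 addn0 => rankWA.
  by rewrite -(mxrank_leqif_sup (krylov_stable_shift K s a)).2 rankWA.
have WK : (W <= krylov_mx K (s + t))%MS.
  by rewrite (submx_trans W_WA) // -(krylov_eigen_shift s At) krylov_stable_shift.
apply: (ltmx_witness WK _ tW).
rewrite -{1}(addKr s t) addmx_sub ?krylov_sub // eqmx_opp.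
exact: submx_trans (krylov_sub K s) WK.
Qed.

Lemma krylov_grow s : (\rank (krylov_mx K s) < n)%N ->
  exists s', (krylov_mx K s < krylov_mx K s')%MS.
Proof.
(* Correct t0 by an element of W so that t (K - a) = c s.  If c = 0, t is an
   eigencovector outside W and s + t works; otherwise t / c is a preimage of s. *)
set W := krylov_mx K s => W_lt.
have [a [t0 [t0W At0W]]] := exists_quotient_eigen W_lt.
set A := K - a%:M in At0W.
have /sub_addsmxP[[u v] /= At0] := submx_trans At0W (krylov_sub_shift K s a).
set t := t0 - u *m W.
have tW : ~~ (t <= W)%MS.
  by apply: contra t0W => tW; rewrite -(subrK (u *m W) t0) addmx_sub ?submxMl.
have At : t *m A = v 0 0 *: s.
  by rewrite mulmxBl At0 mulmxA addrC addKr {1}[v]mx11_scalar mul_scalar_mx.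
have [v0|v_neq0] := eqVneq (v 0 0) 0.
  by exists (s + t); apply: (krylov_eigen_grow (a := a)); rewrite // [LHS]At v0 scale0r.
exists ((v 0 0)^-1 *: t); apply: (ltmx_witness _ (krylov_sub K _)).
  by apply: (krylov_preimage_sub (a := a)); rewrite -scalemxAl At scalerA mulVf ?scale1r.
by rewrite (eqmx_scale _ (invr_neq0 v_neq0)).
Qed.

Lemma exists_krylov_unit : exists s, krylov_mx K s \in unitmx.
Proof.
suff [s rank_s] : exists s, (n <= \rank (krylov_mx K s))%N.
  by exists s; rewrite -row_full_unit /row_full eqn_leq rank_leq_col rank_s.
suff /(_ n) : forall k, exists s, (minn k n <= \rank (krylov_mx K s))%N by rewrite minnn.
elim=> [|k [s rank_s]]; first by exists 0; rewrite min0n.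
have [n_le|rank_lt] := leqP n (\rank (krylov_mx K s)).
  by exists s; rewrite (leq_trans (geq_minr _ _)).
have [s'] := krylov_grow rank_lt; rewrite ltmxErank => /andP[_ lt_rank].
by exists s'; lia.
Qed.

End KrylovClosedField.

Lemma w_simple_kermx_rank (C : numClosedFieldType) n (K : 'M[C]_n) :
  w_simple K -> forall a, (\rank (kermx (K - a%:M)) <= 1)%N.
Proof.
(* [w_simple] is about column eigenvectors, [kermx] about row ones; both spaces
   have dimension n - rank (K - a). *)
move=> wsK a; rewrite mxrank_ker -mxrank_tr -mxrank_ker; set E := kermx _.
have eigE (w : 'rV_n) : (w <= E)%MS -> K *m w^T = a *: w^T.
  move/sub_kermxP/(congr1 trmx); rewrite trmx_mul trmxK trmx0 mulmxBl mul_scalar_mx.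
  by move/eqP; rewrite subr_eq0 => /eqP.
have [/rowV0Pn[v vE v_neq0]|/negbNE/eqP->] := boolP (E != 0); last by rewrite mxrank0.
apply: leq_trans (rank_leq_row v); apply: mxrankS; apply/row_subP => i.
have v_neq0' : v^T != 0 by rewrite -trmx0 (inj_eq trmx_inj).
have [c Ei] := wsK a v^T (row i E)^T v_neq0' (eigE v vE) (eigE _ (row_sub i E)).
by rewrite -[row i E]trmxK Ei linearZ /= trmxK scalemx_sub.
Qed.

Lemma is_basis_unitmx (C : numClosedFieldType) (I : finType) (f : I -> 'rV[C]_#|I|) :
  is_basis f = (\matrix_(i < #|I|) f (enum_val i) \in unitmx).
Proof. by rewrite /is_basis row_free_unit row_full_unit andbb. Qed.

Lemma is_basis_ord (C : numClosedFieldType) n (f : 'I_n -> 'rV[C]_n) :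
  is_basis f = (\matrix_(k < n) f k \in unitmx).
Proof.
have eqM : (\matrix_(i < #|'I_n|) f (enum_val i) :=: \matrix_(k < n) f k)%MS.
  apply/eqmxP/andP; split; apply/row_subP => i; rewrite rowK.
    by rewrite -[f _]rowK row_sub.
  by rewrite -(enum_rankK i) -[f _](rowK (fun k => f (enum_val k))) row_sub.
by rewrite /is_basis /row_free /row_full eqM card_ord andbb -row_full_unit.
Qed.

Lemma mkop_mulmxE (C : numClosedFieldType) (I : finType) (f g : I -> I -> C) x y :
  (mkop f *m mkop g) (enum_rank x) (enum_rank y) = \sum_z f x z * g z y.
Proof.
rewrite mxE (reindex (@enum_rank I)) /=.
  by apply: eq_bigr => z _; rewrite !mxE !enum_rankK.
by exists enum_val => z _; rewrite ?enum_valK ?enum_rankK.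
Qed.

Section TransferMatrix.
Variables (C : numClosedFieldType) (n N : nat) (K : 'M[C]_n).

Lemma is_basis_hvec xi S :
  is_basis (hvec K xi S) =
  (hrows_mx S (Kaux N K) (fun a l => Rmat n l (xi a - xi l)) \in unitmx).
Proof.
by rewrite is_basis_unitmx; congr (_ \in unitmx); apply/row_matrixP => i; rewrite !rowK.
Qed.

Lemma tensor_kronmx (t : 'I_N -> 'rV[C]_n) L :
  tensor_covec t *m kronmx L = tensor_covec (fun b => t b *m L b).
Proof.
apply/rowP => j; rewrite /kronmx !mxE; under [RHS]eq_bigr do rewrite mxE.
by rewrite -sum_cfg_prod; apply: eq_bigr => k _; rewrite !mxE -big_split.
Qed.

Lemma ptrace_Kaux_Pperm a :
  @ptrace 'I_n (cfg N n) _ (Kaux N K *m Pperm C n a) =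
  kronmx (fun b => if b == a then K else 1%:M).
Proof.
apply/matrixP => p q; rewrite /Kaux /Pperm !mxE; move: (enum_val p) (enum_val q) => c c'.
have c_upd i : (c == (swap_site a (i, c')).2) =
    (i == c a) && [forall (b | b != a), c b == c' b].
  apply/eqP/andP => [->|[/eqP-> /forall_inP eq_c]]; rewrite /= ?ffunE ?eqxx.
    by split=> //; apply/forall_inP => b nba; rewrite ffunE (negPf nba).
  by apply/ffunP => b; rewrite ffunE; case: eqVneq => [->|/eq_c/eqP].
under [LHS]eq_bigr => i _.
  rewrite mkop_mulmxE sumr_delta /= c_upd.
  over.
under eq_bigr do rewrite /= -mulnb natrM mulrA.
rewrite -mulr_suml sumr_delta (bigD1 a) //= eqxx.
by under eq_bigr => b nba do rewrite (negPf nba) mxE; rewrite prod_eq_indicator.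
Qed.

Lemma hrows_mx_local (s : 'I_N -> 'rV[C]_n) :
  hrows_mx (tensor_covec s) (Kaux N K) (fun a l => if l == a then Pperm C n l else 1) =
  kronmx (fun b => \matrix_(k < n) (s b *m K ^+ k)).
Proof.
have site a : \prod_l (if rev_ord l == a then Pperm C n (rev_ord l) else 1) = Pperm C n a.
  rewrite -big_mkcond (big_pred1 (rev_ord a)) ?rev_ordK // => l.
  by rewrite /= (canF_eq rev_ordK).
have at_site b (h : cfg N n) :
    \prod_a (if b == a then K else 1%:M) ^+ h a = K ^+ h b.
  under eq_bigr do rewrite (fun_if (fun M => M ^+ _)) expr1n.
  by rewrite -big_mkcond (big_pred1 b) // => a; rewrite /= eq_sym.
apply/row_matrixP => i; rewrite !rowK /=.
under eq_bigr do rewrite site ptrace_Kaux_Pperm kronmxX.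
rewrite kronmx_prod tensor_kronmx; apply/rowP => j; rewrite !mxE.
by apply: eq_bigr => b _; rewrite at_site !mxE.
Qed.

Lemma Rmat_rescaled (u : C) (a l : 'I_N) : u != 0 ->
  Rmat n l ((a : nat)%:R / u - (l : nat)%:R / u) =
  (if l == a then 1 else u^-1) *: rescaled_R (Pperm C n) u a l.
Proof.
move=> u_neq0; rewrite /Rmat /rescaled_R; have [->|_] := eqVneq l a.
  by rewrite !subrr raddf0 !add0r !scale1r.
by rewrite scalerDr scale_scalar_mx scalerA mulVf // scale1r -mulrBl mulrC.
Qed.

Lemma is_basis_rescaled (u : C) S : u != 0 ->
  is_basis (hvec K (fun l => (l : nat)%:R / u) S) =
  (hrows_mx S (Kaux N K) (rescaled_R (Pperm C n) u) \in unitmx).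
Proof.
move=> u_neq0; rewrite is_basis_hvec (eq_hrows_mx _ _ (fun a l => Rmat_rescaled a l u_neq0)).
rewrite (@hrows_mxZ_unit _ _ _ _ _ (fun a l => if l == a then 1 else u^-1)) // => a l.
by case: (l == a); rewrite ?oner_eq0 ?invr_eq0.
Qed.

Lemma rescaled_R0_unit (s : 'I_N -> 'rV[C]_n) :
  (forall b, is_basis (fun k : 'I_n => s b *m K ^+ k)) ->
  hrows_mx (tensor_covec s) (Kaux N K) (rescaled_R (Pperm C n) 0) \in unitmx.
Proof.
move=> s_basis; rewrite (eq_hrows_mx _ _ (rescaled_R0 _)) hrows_mxZ_unit.
  by rewrite hrows_mx_local; apply: kronmx_unit => b; rewrite -is_basis_ord.
move=> a l; have [_|neq_la] := eqVneq l a; first exact: oner_neq0.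
by rewrite subr_eq0 eqr_nat; apply: contra neq_la => /eqP/val_inj->.
Qed.

Definition rescaled_poly (S : 'rV[C]_#|cfg N n|) : {poly C} :=
  \det (hrows_mx (map_mx polyC S) (map_mx polyC (Kaux N K))
                 (rescaled_R (fun l => map_mx polyC (Pperm C n l)) 'X)).

Lemma horner_rescaled_poly S u :
  (rescaled_poly S).[u] = \det (hrows_mx S (Kaux N K) (rescaled_R (Pperm C n) u)).
Proof.
have polyCK m m' (M : 'M[C]_(m, m')) : map_mx (horner_eval u) (map_mx polyC M) = M.
  by apply/matrixP => i j; rewrite !mxE horner_evalE hornerC.
rewrite -horner_evalE -det_map_mx map_hrows_mx !polyCK; congr (\det _).
apply: eq_hrows_mx => a l; rewrite map_rescaled_R /rescaled_R polyCK.
by rewrite /= horner_evalE hornerX.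
Qed.

Lemma exists_hvec_basis (s : 'I_N -> 'rV[C]_n) :
  (forall b, is_basis (fun k : 'I_n => s b *m K ^+ k)) ->
  exists xi, is_basis (hvec K xi (tensor_covec s)).
Proof.
move=> s_basis; set p := rescaled_poly (tensor_covec s).
have p0_neq0 : p.[0] != 0.
  by rewrite horner_rescaled_poly -unitfE -unitmxE rescaled_R0_unit.
have /closed_nonrootP[u] : 'X * p != 0.
  by rewrite mulf_neq0 ?polyX_eq0 //; apply: contraNneq p0_neq0 => ->; rewrite horner0.
rewrite rootM rootX negb_or => /andP[u_neq0 pu_neq0].
exists (fun l => (l : nat)%:R / u).
by rewrite is_basis_rescaled // unitmxE unitfE -horner_rescaled_poly.
Qed.

Definition hvec_det_mpoly k (Sx : 'rV[{mpoly C[k]}]_#|cfg N n|)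
    (x : 'I_N -> {mpoly C[k]}) : {mpoly C[k]} :=
  \det (hrows_mx Sx (map_mx (fun c => c%:MP) (Kaux N K))
        (fun a l => (x a - x l)%:M + map_mx (fun c => c%:MP) (Pperm C n l))).

Lemma meval_hvec_det k Sx x (v : 'I_k -> C) S xi :
  (forall l, (x l).@[v] = xi l) -> map_mx (meval v) Sx = S ->
  ((hvec_det_mpoly Sx x).@[v] != 0) = is_basis (hvec K xi S).
Proof.
move=> x_v Sx_v.
have mpolyCK m m' (M : 'M[C]_(m, m')) : map_mx (meval v) (map_mx (fun c => c%:MP) M) = M.
  by apply/matrixP => i j; rewrite !mxE mevalC.
rewrite is_basis_hvec unitmxE unitfE -det_map_mx map_hrows_mx Sx_v mpolyCK.
congr (\det _ != 0); apply: eq_hrows_mx => a l.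
by rewrite map_mxD map_scalar_mx mpolyCK /= mevalB !x_v.
Qed.

End TransferMatrix.

Lemma exists_cyclic_covector (C : numClosedFieldType) n (K : 'M[C]_n) :
  (0 < n)%N -> w_simple K ->
  exists s : 'rV[C]_n, is_basis (fun h : 'I_n => s *m K ^+ h).
Proof.
case: n K => // n' K _ wsK.
have [s s_unit] := exists_krylov_unit (w_simple_kermx_rank wsK).
by exists s; rewrite is_basis_ord.
Qed.

Unset Implicit Arguments. Set Strict Implicit. Set Printing Implicit Defensive.

Theorem proposition2p4 (C : numClosedFieldType) (n N : nat)
  (hn : (0 < n)%N) (hN : (0 < N)%N) (K : 'M[C]_n) :
  w_simple K ->
  (* for almost any (S, xi): outside the zero set of a nonzero polynomial *)
  (exists Q : {mpoly C[#|cfg N n| + N]}, Q != 0 /\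
     forall (S : 'rV[C]_#|cfg N n|) (xi : 'I_N -> C),
       Q.@[join_pt S xi] != 0 -> is_basis (hvec K xi S)) /\
  (* such local cyclic covectors exist *)
  (exists s : 'rV[C]_n, is_basis (fun h : 'I_n => s *m K ^+ h)) /\
  (* for product covectors of local cyclic covectors, almost any xi works *)
  (forall s : 'I_N -> 'rV[C]_n,
     (forall a : 'I_N, is_basis (fun h : 'I_n => s a *m K ^+ h)) ->
     exists Q : {mpoly C[N]}, Q != 0 /\
       forall xi : 'I_N -> C,
         Q.@[xi] != 0 -> is_basis (hvec K xi (tensor_covec s))).
Proof.
move=> wsK; have [s0 s0_basis] := exists_cyclic_covector hn wsK.
split.
  pose d := #|cfg N n|.
  pose Q := hvec_det_mpoly K (\row_j 'X_(lshift N j)) (fun l => 'X_(rshift d l)).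
  have evalQ S xi : (Q.@[join_pt S xi] != 0) = is_basis (hvec K xi S).
    apply: meval_hvec_det => [l|].
      by rewrite mevalXU /join_pt -[rshift d l]/(unsplit (inr l)) unsplitK.
    apply/matrixP => i j; rewrite [i]ord1 !mxE mevalXU.
    by rewrite /join_pt -[lshift N j]/(unsplit (inl j)) unsplitK.
  have [xi0 xi0_basis] := exists_hvec_basis (fun _ : 'I_N => s0_basis).
  exists Q; split=> [|S xi]; last by rewrite evalQ.
  by apply: contraTneq xi0_basis => Q0; rewrite -evalQ Q0 meval0 eqxx.
split=> [|s s_basis]; first by exists s0.
pose Q := hvec_det_mpoly K (map_mx (fun c => c%:MP) (tensor_covec s)) (fun l => 'X_l).
have evalQ xi : (Q.@[xi] != 0) = is_basis (hvec K xi (tensor_covec s)).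
  apply: meval_hvec_det => [l|]; first exact: mevalXU.
  by apply/matrixP => i j; rewrite !mxE mevalC.
have [xi0 xi0_basis] := exists_hvec_basis s_basis.
exists Q; split=> [|xi]; last by rewrite evalQ.
by apply: contraTneq xi0_basis => Q0; rewrite -evalQ Q0 meval0 eqxx.
Qed.
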